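(* Let $\Theta$ be a non-empty finite set, let $\mathcal{S}$ be a measurable subset of $\Delta(\Theta)$, and fix an interview cost $c>0$. For two populations $\pi,\pi'\in\Delta(\mathcal{S})$ with $p_\pi=p_{\pi'}$, $\pi' \mathrel{M} \pi$ holds if and only if either (i) there is systematic ex-ante discrimination against $\pi$, or (ii) there is no ex-ante discrimination.
   Context: $\Delta(\Theta)$ denotes the set of probability distributions on $\Theta$ (with its Borel $\sigma$-algebra). A population is a probability measure $\pi\in\Delta(\mathcal{S})$; its skill distribution is $p_\pi(\theta)=\int_{\mathcal{S}} s(\theta)\,\pi(\mathrm{d}s)$ for $\theta\in\Theta$. For a non-empty finite $A\subset\mathbb{R}^\Theta$, $v_A(s)=\max_{a\in A}\sum_{\theta\in\Theta}a(\theta)s(\theta)$. A firm is a pair $(A,\alpha)$ with $A$ a non-empty finite subset of $\mathbb{R}^\Theta$ and $0<\alpha\le 1$. Firm $(A,\alpha)$ excludes population $\pi$ if $\alpha\int_{\mathcal{S}}\max\{v_A,0\}\,\mathrm{d}\pi\le c$. For $\pi,\pi'$ with $p_\pi=p_{\pi'}$: there is systematic ex-ante discrimination against $\pi$ if every firm that excludes $\pi'$ also excludes $\pi$, and some firm excludes $\pi$ but not $\pi'$. There is unsystematic ex-ante discrimination if there is a firm that excludes $\pi$ but not $\pi'$ and a firm that excludes $\pi'$ but not $\pi$. There is no ex-ante discrimination if there is neither systematic ex-ante discrimination (against $\pi$ or against $\pi'$) nor unsystematic ex-ante discrimination. $\pi' \mathrel{M} \pi$ means $\int_{\mathcal{S}}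 h\,\mathrm{d}\pi'\ge\int_{\mathcal{S}} h\,\mathrm{d}\pi$ for every convex continuous $h:\Delta(\Theta)\to\mathbb{R}$. *)

From HB Require Import structures.
From mathcomp Require Import all_boot all_order all_algebra.
From mathcomp Require Import all_classical all_reals all_analysis.
Set Implicit Arguments. Unset Strict Implicit. Unset Printing Implicit Defensive.
Import Order.TTheory GRing.Theory Num.Theory.
Import numFieldNormedType.Exports.
Local Open Scope classical_set_scope.
Local Open Scope ring_scope.

(* Theta is represented as the index type 'I_n (n > 0 imposed in the theorem);
   R^Theta is 'rV[R]_n, a skill distribution s is a row vector s with
   s 0 i = s(theta_i). *)

Definition Delta (R : realType) (n : nat) : set 'rV[R]_n :=
  [set s | (forall i, 0 <= s 0 i) /\ \sum_(i < n) s 0 i = 1].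
Arguments Delta : clear implicits.

Notation Borel R n := (g_sigma_algebraType (@open 'rV[R]_n)).

Definition dotp (R : realType) (n : nat) (a s : 'rV[R]_n) : R :=
  \sum_(i < n) a 0 i * s 0 i.

(* v_A(s) = max_{a in A} <a, s>; A is a non-empty finite list. *)
Definition vA (R : realType) (n : nat) (A : seq 'rV[R]_n) (s : 'rV[R]_n) : R :=
  \big[Num.max/dotp (head 0 A) s]_(a <- A) dotp a s.

Definition firm (R : realType) (n : nat) (A : seq 'rV[R]_n) (alpha : R) : Prop :=
  A != [::] /\ 0 < alpha <= 1.

(* population pi (a probability measure on R^Theta concentrated on S) *)
Definition excludes (R : realType) (n : nat) (c : R) (S : set (Borel R n))
    (A : seq 'rV[R]_n) (alpha : R) (pi : probability (Borel R n) R) : Prop :=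
  (alpha%:E * \int[pi]_(s in S) (Num.max (vA A s) 0)%:E <= c%:E)%E.

Definition skill (R : realType) (n : nat) (S : set (Borel R n))
    (pi : probability (Borel R n) R) (i : 'I_n) : \bar R :=
  \int[pi]_(s in S) (s 0 i)%:E.

Definition systematic (R : realType) (n : nat) (c : R) (S : set (Borel R n))
    (pi pi' : probability (Borel R n) R) : Prop :=
  (forall A alpha, firm A alpha -> excludes c S A alpha pi' -> excludes c S A alpha pi)
  /\ (exists A alpha, firm A alpha /\ excludes c S A alpha pi
                                    /\ ~ excludes c S A alpha pi').

Definition unsystematic (R : realType) (n : nat) (c : R) (S : set (Borel R n))
    (pi pi' : probability (Borel R n) R) : Prop :=
  (exists A alpha, firm A alpha /\ excludes c S A alpha pi /\ ~ excludes c S A alpha pi')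
  /\ (exists A alpha, firm A alpha /\ excludes c S A alpha pi' /\ ~ excludes c S A alpha pi).

Definition no_discrimination (R : realType) (n : nat) (c : R) (S : set (Borel R n))
    (pi pi' : probability (Borel R n) R) : Prop :=
  ~ systematic c S pi pi' /\ ~ systematic c S pi' pi /\ ~ unsystematic c S pi pi'.

Definition Mrel (R : realType) (n : nat) (S : set (Borel R n))
    (pi' pi : probability (Borel R n) R) : Prop :=
  forall h : 'rV[R]_n -> R,
    convex_function (Delta R n) h ->
    {within Delta R n, continuous h} ->
    (\int[pi']_(s in S) (h s)%:E >= \int[pi]_(s in S) (h s)%:E)%E.

From HB Require Import structures.
From mathcomp Require Import all_boot all_order all_algebra.
From mathcomp Require Import finmap.
From mathcomp Require Import all_classical all_reals all_analysis.
From mathcomp Require Import ring lra.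
Import Order.TTheory GRing.Theory Num.Theory.
Import numFieldNormedType.Exports.
Local Open Scope classical_set_scope.
Local Open Scope ring_scope.
Set Implicit Arguments. Unset Strict Implicit. Unset Printing Implicit Defensive.

(* Both sides of the equivalence say that every firm excluding pi' also excludes
   pi. The payoff s |-> max (v_A s) 0 is convex and continuous on the simplex,
   so M implies this. Conversely, rescaling the actions of a firm compares the
   integrals of max (v_A s) 0 under pi and pi'; adding a large multiple of the
   all-ones vector, which pairs to 1 with every point of the simplex, removes
   the positive part; and every convex continuous function on the simplex is a
   uniform limit from below of functions v_A. The last fact follows, by
   compactness, from the existence of supporting hyperplanes at relative
   interior points, which are built one coordinate at a time as in the
   finite-dimensional Hahn-Banach theorem. *)

Section Dotp.
Variables (R : realType) (n : nat).
Implicit Types (a b s x y : 'rV[R]_n) (k : R).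

Definition ones : 'rV[R]_n := const_mx 1.

Lemma dotpDl a b s : dotp (a + b) s = dotp a s + dotp b s.
Proof. by rewrite /dotp -big_split; apply: eq_bigr => i _; rewrite mxE mulrDl. Qed.

Lemma dotpZl k a s : dotp (k *: a) s = k * dotp a s.
Proof. by rewrite /dotp mulr_sumr; apply: eq_bigr => i _; rewrite mxE mulrA. Qed.

Lemma dotpDr a x y : dotp a (x + y) = dotp a x + dotp a y.
Proof. by rewrite /dotp -big_split; apply: eq_bigr => i _; rewrite mxE mulrDr. Qed.

Lemma dotpZr k a s : dotp a (k *: s) = k * dotp a s.
Proof. by rewrite /dotp mulr_sumr; apply: eq_bigr => i _; rewrite mxE mulrCA. Qed.

Lemma dotpBr a x y : dotp a (x - y) = dotp a x - dotp a y.
Proof. by rewrite dotpDr -scaleN1r dotpZr mulN1r. Qed.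

Lemma dotp0l s : dotp 0 s = 0.
Proof. by rewrite /dotp big1 // => i _; rewrite mxE mul0r. Qed.

Lemma dotp0r a : dotp a 0 = 0.
Proof. by rewrite /dotp big1 // => i _; rewrite mxE mulr0. Qed.

Lemma dotp_delta_mxl i s : dotp (delta_mx 0 i) s = s 0 i.
Proof.
rewrite /dotp (bigD1 i) //= big1 ?addr0 => [|j ji]; first by rewrite mxE !eqxx mul1r.
by rewrite mxE (negPf ji) andbF mul0r.
Qed.

Lemma dotp_delta_mxr a i : dotp a (delta_mx 0 i) = a 0 i.
Proof.
rewrite /dotp (bigD1 i) //= big1 ?addr0 => [|j ji]; first by rewrite mxE !eqxx mulr1.
by rewrite mxE (negPf ji) andbF mulr0.
Qed.

Lemma dotp_onesl s : dotp ones s = \sum_i s 0 i.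
Proof. by apply: eq_bigr => i _; rewrite mxE mul1r. Qed.

Lemma continuous_dotp a : continuous (dotp a).
Proof.
rewrite /dotp; elim: (index_enum _) => [|i r IH].
  by under eq_fun do rewrite big_nil; exact: cst_continuous.
under eq_fun do rewrite big_cons.
move=> x; apply: (@continuousD _ _ _ (fun s => a 0 i * s 0 i)); last exact: IH.
by apply: continuousM; [exact: cst_continuous|exact: coord_continuous].
Qed.

End Dotp.

Section ActionValue.
Variables (R : realType) (n : nat).
Implicit Types (A : seq 'rV[R]_n) (a s x y : 'rV[R]_n).

Lemma dotp_le_vA A a s : a \in A -> dotp a s <= vA A s.
Proof. by move=> aA; exact: (le_bigmax_seq _ a xpredT (fun b => dotp b s) aA isT). Qed.

Lemma vA_le A s m : A != [::] -> (forall a, a \in A -> dotp a s <= m) -> vA A s <= m.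
Proof.
case: A => [//|a0 A] _ le_m; rewrite /vA big_seq.
by apply: bigmax_le => [|a aA]; apply: le_m; rewrite ?mem_head.
Qed.

Lemma vA_cons0 A s : A != [::] -> vA (0 :: A) s = Num.max (vA A s) 0.
Proof.
move=> A0; apply/eqP; rewrite eq_le; apply/andP; split.
  apply: vA_le => // a; rewrite inE => /orP[/eqP->|aA].
    by rewrite dotp0l le_max lexx orbT.
  by rewrite le_max dotp_le_vA.
rewrite ge_max -(dotp0l s) dotp_le_vA ?mem_head // andbT.
by apply: vA_le => // a aA; rewrite dotp_le_vA // inE aA orbT.
Qed.

Lemma vA_attained A s : A != [::] -> exists2 a, a \in A & vA A s = dotp a s.
Proof.
move=> A0; suff /mapP[a aA ->] : vA A s \in [seq dotp a s | a <- A] by exists a.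
case: A A0 => [//|a0 A] _; rewrite /vA big_seq.
apply: (big_ind (fun u => u \in [seq dotp a s | a <- a0 :: A])) => [|u v uA vA'|a aA].
- exact: (map_f (fun a => dotp a s) (mem_head a0 A)).
- by rewrite maxEle; case: ifP.
- exact: (map_f (fun a => dotp a s) aA).
Qed.

Lemma vA_map A (f : 'rV[R]_n -> 'rV[R]_n) (g : R -> R) s :
  A != [::] -> {homo g : u v / u <= v} -> (forall a, dotp (f a) s = g (dotp a s)) ->
  vA (map f A) s = g (vA A s).
Proof.
move=> A0 g_homo fg; have fA0 : map f A != [::] by rewrite -size_eq0 size_map size_eq0.
apply/eqP; rewrite eq_le; apply/andP; split.
  by apply: vA_le => // _ /mapP[a aA ->]; rewrite fg g_homo // dotp_le_vA.
have [a aA ->] := vA_attained s A0.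
by rewrite -fg dotp_le_vA // map_f.
Qed.

Lemma vA_convex A x y t : A != [::] -> 0 <= t <= 1 ->
  vA A (t *: x + (1 - t) *: y) <= t * vA A x + (1 - t) * vA A y.
Proof.
move=> A0 /andP[t0 t1]; apply: vA_le => // a aA.
by rewrite dotpDr !dotpZr lerD // ler_wpM2l ?subr_ge0 // dotp_le_vA.
Qed.

Lemma continuous_vA A : continuous (vA A).
Proof.
suff gen a0 : continuous (fun s => \big[Num.max/dotp a0 s]_(a <- A) dotp a s) by exact: gen.
elim: A => [|a A IH]; first by under eq_fun do rewrite big_nil; exact: continuous_dotp.
have -> : (fun s => \big[Num.max/dotp a0 s]_(b <- a :: A) dotp b s) =
    dotp a \max (fun s => \big[Num.max/dotp a0 s]_(b <- A) dotp b s).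
  by apply: funext => s; rewrite big_cons.
by move=> x; apply: continuous_max; [exact: continuous_dotp | exact: IH].
Qed.

End ActionValue.

Section Simplex.
Variables (R : realType) (n : nat).
Implicit Types (x y : 'rV[R]_n).

Lemma dotp_ones_Delta x : Delta R n x -> dotp (ones R n) x = 1.
Proof. by case=> _ <-; rewrite dotp_onesl. Qed.

Lemma Delta_convex x y t : Delta R n x -> Delta R n y -> 0 <= t <= 1 ->
  Delta R n (t *: x + (1 - t) *: y).
Proof.
move=> [x0 x1] [y0 y1] /andP[t0 t1]; split => [i|].
  by rewrite !mxE addr_ge0 // mulr_ge0 // subr_ge0.
under eq_bigr do rewrite !mxE.
by rewrite big_split /= -!mulr_sumr x1 y1 !mulr1 addrC subrK.
Qed.

Lemma Delta_compact : compact (Delta R n).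
Proof.
have -> : Delta R n = [set x : 'rV[R]_n | forall i, `[0, 1]%classic (x 0 i)] `&`
                      dotp (ones R n) @^-1` [set 1].
  apply/seteqP; split => x.
    move=> xD; split; last exact: dotp_ones_Delta.
    case: xD => x0 x1 i /=; rewrite in_itv /= x0 -x1 (bigD1 i) //= lerDl.
    exact: sumr_ge0.
  case=> /= x01 x1; split; last by rewrite -dotp_onesl.
  by move=> i; have := x01 i; rewrite in_itv => /andP[].
apply: compact_closedI.
  exact: (@rV_compact R n (fun=> `[0, 1]%classic) (fun=> @segment_compact R 0 1)).
apply: preimage_closed; first by move=> x _; exact: continuous_dotp.
exact: closed_eq.
Qed.

Definition barycenter : 'rV[R]_n := n%:R^-1 *: ones R n.

Hypothesis n_gt0 : (0 < n)%N.

Lemma barycenter_gt0 i : 0 < barycenter 0 i.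
Proof. by rewrite !mxE mulr1 invr_gt0 ltr0n. Qed.

Lemma Delta_barycenter : Delta R n barycenter.
Proof.
split => [i|]; first exact/ltW/barycenter_gt0.
under eq_bigr do rewrite !mxE mulr1.
by rewrite sumr_const card_ord -[_ *+ n]mulr_natr mulVf // pnatr_eq0 -lt0n.
Qed.

End Simplex.

Lemma slope_le_of_chord (R : realFieldType) (s1 s2 g1 g2 : R) : s1 < 0 -> 0 < s2 ->
  0 <= s2 / (s2 - s1) * g1 + (1 - s2 / (s2 - s1)) * g2 -> g1 / s1 <= g2 / s2.
Proof.
move=> s1_lt0 s2_gt0; have d_gt0 : 0 < s2 - s1 by lra.
have -> : s2 / (s2 - s1) * g1 + (1 - s2 / (s2 - s1)) * g2 = (s2 * g1 - s1 * g2) / (s2 - s1).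
  by field; rewrite gt_eqF.
rewrite pmulr_lge0 ?invr_gt0 // => chord.
by rewrite ler_pdivlMr // mulrAC ler_ndivrMr //; nra.
Qed.

(* A subgradient at 0 on the span of the first k axes extends to the first
   k + 1: by convexity, the slopes of phi along negative multiples of the next
   axis lie below those along positive multiples, and any value in between can
   be taken as the new coordinate. *)
Section AxialSubgradient.
Variables (R : realType) (n : nat) (U : set 'rV[R]_n) (phi : 'rV[R]_n -> R).
Hypothesis U_convex : forall x y t, U x -> U y -> 0 <= t <= 1 -> U (t *: x + (1 - t) *: y).
Hypothesis phi_convex : forall x y t, U x -> U y -> 0 <= t <= 1 ->
  phi (t *: x + (1 - t) *: y) <= t * phi x + (1 - t) * phi y.
Hypothesis U_axes : forall i : 'I_n,
  (exists2 s, s < 0 & U (s *: delta_mx 0 i)) /\ (exists2 s, 0 < s & U (s *: delta_mx 0 i)).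

Let supported k (t : 'rV[R]_n) := forall j : 'I_n, (k <= j)%N -> t 0 j = 0.

Let subgradient_on k a := forall t, supported k t -> U t -> phi 0 + dotp a t <= phi t.

Let slope a e t s := (phi (t + s *: e) - phi 0 - dotp a t) / s.

Lemma supported0 k : supported k 0.
Proof. by move=> j _; rewrite mxE. Qed.

Lemma slope_le k a e t1 t2 s1 s2 : subgradient_on k a ->
  supported k t1 -> supported k t2 -> s1 < 0 -> 0 < s2 ->
  U (t1 + s1 *: e) -> U (t2 + s2 *: e) -> slope a e t1 s1 <= slope a e t2 s2.
Proof.
move=> ha st1 st2 s1_lt0 s2_gt0 U1 U2; apply: slope_le_of_chord => //.
set l := s2 / (s2 - s1).
have l01 : 0 <= l <= 1.
  by rewrite divr_ge0 ?ler_pdivrMr ?mul1r /=; lra.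
have mid : l *: (t1 + s1 *: e) + (1 - l) *: (t2 + s2 *: e) = l *: t1 + (1 - l) *: t2.
  have ls : l * s1 + (1 - l) * s2 = 0 by rewrite /l; field; rewrite gt_eqF ?subr_gt0 //; lra.
  by rewrite !scalerDr !scalerA addrACA -scalerDl ls scale0r addr0.
have supp_mid : supported k (l *: t1 + (1 - l) *: t2).
  by move=> j kj; rewrite !mxE st1 // st2 // !mulr0 addr0.
have := ha _ supp_mid; rewrite -mid => /(_ (U_convex U1 U2 l01)).
have := phi_convex U1 U2 l01; rewrite mid dotpDr !dotpZr; lra.
Qed.

Lemma slope_separation k a e : subgradient_on k a ->
  (exists2 s, s < 0 & U (s *: e)) -> (exists2 s, 0 < s & U (s *: e)) ->
  exists c,
    (forall t s, supported k t -> s < 0 -> U (t + s *: e) -> slope a e t s <= c) /\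
    (forall t s, supported k t -> 0 < s -> U (t + s *: e) -> c <= slope a e t s).
Proof.
move=> ha [s1 s1_lt0 U1] [s2 s2_gt0 U2].
pose L := [set r | exists t s, [/\ supported k t, s < 0, U (t + s *: e) & r = slope a e t s]].
have U1' : U (0 + s1 *: e) by rewrite add0r.
have U2' : U (0 + s2 *: e) by rewrite add0r.
have L_ub : ubound L (slope a e 0 s2).
  move=> _ [t [s [st s_lt0 Ut ->]]].
  exact: slope_le ha st (@supported0 k) s_lt0 s2_gt0 Ut U2'.
have L0 : L !=set0 by exists (slope a e 0 s1), 0, s1; split=> //; exact: (@supported0 k).
exists (sup L); split=> [t s st s_lt0 Ut|t s st s_gt0 Ut].
  by apply: sup_upper_bound; [split=> //; exists (slope a e 0 s2) | exists t, s].
apply: ge_sup L0 _ => _ [t' [s' [st' s'_lt0 Ut' ->]]].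
exact: slope_le ha st' st s'_lt0 s_gt0 Ut' Ut.
Qed.

Lemma subgradient_on_succ k a : (k < n)%N -> subgradient_on k a ->
  exists a', subgradient_on k.+1 a'.
Proof.
move=> kn ha; pose i := Ordinal kn; pose e : 'rV[R]_n := delta_mx 0 i.
have [c [c_ge c_le]] := slope_separation ha (proj1 (U_axes i)) (proj2 (U_axes i)).
exists (a + (c - a 0 i) *: e) => t st Ut.
pose s := t 0 i; pose t' := t - s *: e.
have st' : supported k t'.
  move=> j kj; rewrite !mxE; have [ji|ji] := eqVneq j i.
    by rewrite ji !eqxx mulr1 subrr.
  rewrite andbF mulr0 subr0 st //.
  by rewrite ltn_neqAle kj andbT; apply: contra ji => /eqP kj'; apply/eqP/val_inj.
have tE : t = t' + s *: e by rewrite subrK.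
have -> : dotp (a + (c - a 0 i) *: e) t = dotp a t' + c * s.
  by rewrite /t' /e dotpDl dotpZl dotp_delta_mxl dotpBr dotpZr dotp_delta_mxr /s; ring.
rewrite tE in Ut *; case: (ltrgt0P s) => [s_gt0|s_lt0|s0].
- by have := c_le _ _ st' s_gt0 Ut; rewrite ler_pdivlMr //; lra.
- by have := c_ge _ _ st' s_lt0 Ut; rewrite ler_ndivrMr //; lra.
- move: Ut; rewrite s0 scale0r mulr0 !addr0 => Ut.
  by apply: ha => // j kj; apply: st'; exact: ltnW.
Qed.

Lemma axial_subgradient : exists a, forall t, U t -> phi 0 + dotp a t <= phi t.
Proof.
suff [a ha] : exists a, subgradient_on n a.
  by exists a => t; apply: ha => j; rewrite leqNgt ltn_ord.
suff gen k : (k <= n)%N -> exists a, subgradient_on k a by exact: gen.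
elim: k => [_|k IH kn].
  exists 0 => t t0 _; have -> : t = 0 by apply/rowP => j; rewrite mxE t0.
  by rewrite dotp0l addr0.
have [a ha] := IH (ltnW kn); exact: subgradient_on_succ ha.
Qed.

End AxialSubgradient.

Lemma convex_functionP (R : realType) n (D : set 'rV[R]_n) (h : 'rV[R]_n -> R) :
  convex_function D h <-> forall x y t, D x -> D y -> 0 <= t <= 1 ->
    h (t *: x + (1 - t) *: y) <= t * h x + (1 - t) * h y.
Proof.
split=> [hc x y t Dx Dy /andP[t0 t1]|hc t x y /set_mem Dx /set_mem Dy].
  exact: (hc (Itv01 t0 t1) x y (mem_set Dx) (mem_set Dy)).
by apply: hc => //; rewrite ge0 le1.
Qed.

(* [chart y] maps R^n affinely onto the hyperplane of vectors summing to 1, with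
   [chart y 0 = y], so that a subgradient at [y] can be built along the
   coordinate axes of R^n. *)
Definition chart (R : realType) n (y t : 'rV[R]_n) : 'rV[R]_n :=
  y + t - dotp (ones R n) t *: y.

Lemma chart_affine (R : realType) n (y t1 t2 : 'rV[R]_n) (l : R) :
  chart y (l *: t1 + (1 - l) *: t2) = l *: chart y t1 + (1 - l) *: chart y t2.
Proof. by rewrite /chart dotpDr !dotpZr; apply/rowP => i; rewrite !mxE; ring. Qed.

Lemma chart0 (R : realType) n (y : 'rV[R]_n) : chart y 0 = y.
Proof. by rewrite /chart dotp0r scale0r addr0 subr0. Qed.

Lemma chart_sub (R : realType) n (y z : 'rV[R]_n) :
  Delta R n y -> Delta R n z -> chart y (z - y) = z.
Proof.
by move=> Dy Dz; rewrite /chart dotpBr !dotp_ones_Delta // subrr scale0r subr0 addrC subrK.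
Qed.

Lemma Delta_chart_axis (R : realType) n (y : 'rV[R]_n) i s :
  Delta R n y -> - y 0 i <= s <= 1 -> Delta R n (chart y (s *: delta_mx 0 i)).
Proof.
move=> [y0 y1] /andP[s_ge s_le1].
have coordE j : chart y (s *: delta_mx 0 i) 0 j = (1 - s) * y 0 j + s * (j == i)%:R.
  by rewrite /chart dotpZr dotp_delta_mxr !mxE eqxx /=; ring.
split=> [j|]; last first.
  under eq_bigr do rewrite coordE.
  rewrite big_split /= -!mulr_sumr y1 (bigD1 i) //= eqxx big1 ?addr0 => [|j /negPf->//].
  by rewrite /= !mulr1 subrK.
rewrite coordE; have [->|_] := eqVneq j i; last first.
  by rewrite mulr0 addr0 mulr_ge0 // subr_ge0.
have yi0 := y0 i; have yi1 : y 0 i <= 1 by rewrite -y1 (bigD1 i) //= lerDl sumr_ge0.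
rewrite /= mulr1; nra.
Qed.

Lemma Delta_subgradient (R : realType) n (h : 'rV[R]_n -> R) y :
  convex_function (Delta R n) h -> Delta R n y -> (forall i, 0 < y 0 i) ->
  exists b, (forall z, Delta R n z -> dotp b z <= h z) /\ dotp b y = h y.
Proof.
move=> hc Dy y_gt0.
have [a ha] : exists a, forall t,
    Delta R n (chart y t) -> h (chart y 0) + dotp a t <= h (chart y t).
  apply: (@axial_subgradient R n (fun t => Delta R n (chart y t)) (h \o chart y)).
  - by move=> t1 t2 l ? ? ?; rewrite chart_affine; exact: Delta_convex.
  - by move=> t1 t2 l ? ? ?; rewrite /= chart_affine; exact: (proj1 (convex_functionP _ _) hc).
  - move=> i; have yi := y_gt0 i; split.
      exists (- y 0 i); first by rewrite oppr_lt0.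
      by apply: Delta_chart_axis => //; rewrite lexx /=; lra.
    by exists 1; [exact: ltr01 | apply: Delta_chart_axis => //; rewrite lexx andbT; lra].
exists (a + (h y - dotp a y) *: ones R n); split=> [z Dz|]; last first.
  by rewrite dotpDl dotpZl dotp_ones_Delta //; ring.
have := ha (z - y); rewrite /= chart_sub // chart0 => /(_ Dz).
by rewrite dotpDl dotpZl dotp_ones_Delta // dotpBr; lra.
Qed.

Lemma near0_mul_lt (R : realType) (K B : R) : 0 < B -> \forall t \near 0^'+, t * K < B.
Proof.
move=> B_gt0; have KB_gt0 : 0 < B / (`|K| + 1) by rewrite divr_gt0 // ltr_wpDl.
near=> t.
have t_gt0 : 0 < t by near: t; exact: nbhs_right_gt.
have : t < B / (`|K| + 1) by near: t; exact: nbhs_right_lt.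
rewrite ltr_pdivlMr ?ltr_wpDl // => tK.
have := ler_wpM2l (ltW t_gt0) (ler_norm K).
nra.
Unshelve. all: by end_near. Qed.

Lemma within_continuous_dist (R : realType) n (D : set 'rV[R]_n) (h : 'rV[R]_n -> R) x e :
  {within D, continuous h} -> D x -> 0 < e ->
  exists2 d, 0 < d & forall z, D z -> `|x - z| < d -> `|h x - h z| < e.
Proof.
move=> /subspace_continuousP /(_ x) hx Dx e_gt0.
move: (hx Dx) => /cvgrPdist_lt /(_ e e_gt0); rewrite /within => /nbhs_ballP[d d_gt0 hd].
by exists d => // z Dz xz; apply: hd => //; rewrite -ball_normE.
Qed.

Lemma within_open_lt (T : topologicalType) (R : realType) (D : set T) (f : T -> R) e :
  {within D, continuous f} -> exists2 V, open V & V `&` D = [set z | f z < e] `&` D.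
Proof. by move=> /continuousP /(_ _ (@open_lt _ e)) /open_subspaceP. Qed.

Section ConvexApprox.
Variables (R : realType) (n : nat) (h : 'rV[R]_n -> R).
Hypotheses (n_gt0 : (0 < n)%N) (h_convex : convex_function (Delta R n) h)
  (h_cont : {within Delta R n, continuous h}).

(* Take a subgradient at the interior point t c + (1 - t) x, for t small. *)
Lemma affine_minorant_near x e : Delta R n x -> 0 < e ->
  exists b, (forall z, Delta R n z -> dotp b z <= h z) /\ h x - e < dotp b x.
Proof.
move=> Dx e_gt0; have e2_gt0 : 0 < e / 2 by rewrite divr_gt0.
have [d d_gt0 hd] := within_continuous_dist h_cont Dx e2_gt0.
pose c := barycenter R n; pose y t := t *: c + (1 - t) *: x.
have : \forall t \near 0^'+,
    [/\ 0 < t, t < 1, t * `|x - c| < d & t * (`|h c - h x| + e) < e / 2].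
  near=> t; split; near: t;
    [exact: nbhs_right_gt | exact: nbhs_right_lt | exact: near0_mul_lt | exact: near0_mul_lt].
move=> /filter_ex[t [t_gt0 t_lt1 t_d t_e]].
have Dy : Delta R n (y t).
  by apply: Delta_convex => //; [exact: Delta_barycenter | rewrite ltW //= ltW].
have y_gt0 i : 0 < y t 0 i.
  move: (barycenter_gt0 R n_gt0 i) ((proj1 Dx) i); rewrite /y /c !mxE => c_gt0 x_ge0.
  by apply: ltr_wpDr; [rewrite mulr_ge0 // subr_ge0 ltW | rewrite mulr_gt0].
have [b [hb hby]] := Delta_subgradient h_convex Dy y_gt0.
exists b; split => //.
have hy : h x - e / 2 < h (y t).
  have : `|x - y t| < d.
    have -> : x - y t = t *: (x - c) by apply/rowP => i; rewrite !mxE; ring.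
    by rewrite normrZ gtr0_norm.
  by move=> /(hd _ Dy); rewrite ltr_norml; lra.
have hbc := hb c (Delta_barycenter R n_gt0).
have hcx := ler_wpM2l (ltW t_gt0) (ler_norm (h c - h x)).
have : dotp b (y t) = t * dotp b c + (1 - t) * dotp b x by rewrite dotpDr !dotpZr.
rewrite hby => hyE.
suff : (1 - t) * (h x - e) < (1 - t) * dotp b x by rewrite ltr_pM2l // subr_gt0.
nra.
Unshelve. all: by end_near. Qed.

Lemma vA_approx e : 0 < e -> exists A, A != [::] /\
  forall z, Delta R n z -> vA A z <= h z /\ h z < vA A z + e.
Proof.
move=> e_gt0.
have /choice[B hB] : forall x, exists b, Delta R n x ->
    (forall z, Delta R n z -> dotp b z <= h z) /\ h x - e < dotp b x.
  move=> x; have [Dx|nDx] := pselect (Delta R n x); last by exists 0.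
  by have [b hb] := affine_minorant_near Dx e_gt0; exists b.
have /choice[V hV] : forall x, exists W : set 'rV[R]_n,
    open W /\ W `&` Delta R n = [set z | h z - dotp (B x) z < e] `&` Delta R n.
  move=> x; have gap_cont : {within Delta R n, continuous (fun z => h z - dotp (B x) z)}.
    by apply: within_continuousB => //; apply: continuous_subspaceT; exact: continuous_dotp.
  by have [W oW hW] := within_open_lt e gap_cont; exists W.
have cover_Delta : Delta R n `<=` cover (Delta R n) V.
  move=> x Dx; exists x => //.
  suff : (V x `&` Delta R n) x by case.
  by rewrite (proj2 (hV x)); split=> //=; have [_] := hB x Dx; lra.
have := @Delta_compact R n; rewrite compact_cover.
move=> /(_ _ _ _ (fun x _ => proj1 (hV x)) cover_Delta) [D' D'_Delta D'_cover].
have A0 : [seq B x | x <- enum_fset D'] != [::].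
  have [x D'x _] := D'_cover _ (Delta_barycenter R n_gt0).
  have : x \in enum_fset D' by exact: D'x.
  by case: (enum_fset D').
exists [seq B x | x <- enum_fset D']; split=> // z Dz; split.
  apply: vA_le => // _ /mapP[x D'x ->].
  by apply: (proj1 (hB x _)) => //; exact/set_mem/D'_Delta.
have [x D'x Vxz] := D'_cover z Dz.
have : (V x `&` Delta R n) z by [].
rewrite (proj2 (hV x)) => -[/= gap _].
by have := dotp_le_vA z (map_f B D'x); lra.
Qed.

End ConvexApprox.

Lemma bounded_within_Delta (R : realType) n (f : 'rV[R]_n -> R) :
  {within Delta R n, continuous f} -> [bounded f x | x in Delta R n].
Proof.
move=> f_cont.
have [M [M_real hM]] := compact_bounded (continuous_compact f_cont (@Delta_compact R n)).
by exists M; split=> // N MN x Dx; apply: (hM N MN); exists x.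
Qed.

Lemma bound_within_Delta (R : realType) n (f : 'rV[R]_n -> R) :
  {within Delta R n, continuous f} -> exists M, forall z, Delta R n z -> `|f z| <= M.
Proof.
move=> /bounded_within_Delta[M [_ hM]].
by exists (M + 1); apply: hM; rewrite ltrDl.
Qed.

Section ExpectationOnSimplex.
Variables (R : realType) (n : nat) (S : set (Borel R n)).
Hypotheses (mS : measurable S) (SD : S `<=` Delta R n).
Variable P : probability (Borel R n) R.
Hypothesis PS : P S = 1%E.
Implicit Types f g : 'rV[R]_n -> R.

Lemma measurable_within_Delta f :
  {within Delta R n, continuous f} -> measurable_fun S (f : Borel R n -> R).
Proof.
move=> /continuousP f_cont.
apply: (measurability _ (measurable_realfun.RGenOpens.measurableE R)).
move=> _ [_ [a [b ->]] <-].
have /open_subspaceP[V oV VD] : open (from_subspace (Delta R n) f @^-1` `]a, b[%classic).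
  exact/f_cont/interval_open.
have -> : S `&` f @^-1` `]a, b[%classic = S `&` V.
  apply/seteqP; split=> x [Sx fx]; split=> //.
    by have [] : (V `&` Delta R n) x by rewrite VD; split=> //; exact: SD.
  by have [] : (f @^-1` `]a, b[%classic `&` Delta R n) x by rewrite -VD; split=> //; exact: SD.
by apply: measurableI => //; exact: sub_sigma_algebra.
Qed.

Lemma integrable_within_Delta f :
  {within Delta R n, continuous f} -> P.-integrable S (EFin \o f).
Proof.
move=> f_cont; apply: measurable_bounded_integrable => //.
- by apply: le_lt_trans (probability_le1 _ mS) _; rewrite ltry.
- exact: measurable_within_Delta.
- by apply: filterS (bounded_within_Delta f_cont) => M hM x /SD; exact: hM.
Qed.

Lemma integral_within_Delta_fin_num f :
  {within Delta R n, continuous f} -> (\int[P]_(s in S) (f s)%:E)%E \is a fin_num.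
Proof. by move=> f_cont; apply: integrable_fin_num => //; exact: integrable_within_Delta. Qed.

Lemma integral_cst_prob k : (\int[P]_(s in S) k%:E = k%:E)%E.
Proof. by transitivity (k%:E * P S)%E; [exact: integral_cst | rewrite PS mule1]. Qed.

Lemma integral_addr_cst f k : {within Delta R n, continuous f} ->
  (\int[P]_(s in S) (f s + k)%:E = \int[P]_(s in S) (f s)%:E + k%:E)%E.
Proof.
move=> f_cont.
have -> : (\int[P]_(s in S) (f s + k)%:E = \int[P]_(s in S) ((f s)%:E + k%:E))%E by [].
rewrite integralD //; first by rewrite integral_cst_prob.
  exact: integrable_within_Delta.
exact: finite_measure_integrable_cst.
Qed.

Lemma le_integral_within_Delta f g :
  {within Delta R n, continuous f} -> {within Delta R n, continuous g} ->
  (forall z, Delta R n z -> f z <= g z) ->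
  (\int[P]_(s in S) (f s)%:E <= \int[P]_(s in S) (g s)%:E)%E.
Proof.
move=> f_cont g_cont fg; apply: le_integral; rewrite ?integrable_within_Delta //.
by move=> s /set_mem /SD Ds; rewrite lee_fin fg.
Qed.

End ExpectationOnSimplex.

Section Exclusion.
Variables (R : realType) (n : nat) (c : R) (S : set (Borel R n)).
Implicit Types pi : probability (Borel R n) R.

Definition exclusion_sub pi' pi := forall A alpha,
  firm A alpha -> excludes c S A alpha pi' -> excludes c S A alpha pi.

Lemma not_exclusion_sub pi' pi : ~ exclusion_sub pi' pi <->
  exists A alpha, firm A alpha /\ excludes c S A alpha pi' /\ ~ excludes c S A alpha pi.
Proof.
split=> [nsub|[A [alpha [fA [ex' nex]]]] sub]; last exact/nex/sub.
apply: contrapT => none; apply: nsub => A alpha fA ex'.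
by apply: contrapT => nex; apply: none; exists A, alpha.
Qed.

Lemma discrimination_cases pi pi' :
  systematic c S pi pi' \/ no_discrimination c S pi pi' <-> exclusion_sub pi' pi.
Proof.
have := not_exclusion_sub pi pi'; have := not_exclusion_sub pi' pi.
rewrite /no_discrimination /unsystematic /systematic /exclusion_sub.
have [] := pselect (exclusion_sub pi' pi); have [] := pselect (exclusion_sub pi pi');
rewrite /exclusion_sub; tauto.
Qed.

End Exclusion.

Lemma le_of_scaled_le (R : realType) (c : R) (x y : \bar R) : 0 < c ->
  x \is a fin_num -> y \is a fin_num -> (0 <= x)%E -> (0 <= y)%E ->
  (forall t, 0 < t -> (t%:E * y <= c%:E)%E -> (t%:E * x <= c%:E)%E) -> (x <= y)%E.
Proof.
move=> c_gt0 /fineK <- /fineK <-; rewrite !lee_fin; set u := fine x; set v := fine y.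
move=> u_ge0 v_ge0 scaled; rewrite leNgt; apply/negP => vu.
have uv_gt0 : 0 < u + v by lra.
have t_gt0 : 0 < 2 * c / (u + v) by rewrite divr_gt0 ?mulr_gt0.
have := scaled _ t_gt0; rewrite -!EFinM !lee_fin !(mulrAC _ (u + v)^-1) !ler_pdivrMr //.
have : 0 < c * (u - v) by rewrite mulr_gt0 ?subr_gt0.
nra.
Qed.

Section MaxPayoff.
Variables (R : realType) (n : nat) (A : seq 'rV[R]_n).
Hypothesis A0 : A != [::].

Lemma continuous_max_vA0 : continuous (fun s => Num.max (vA A s) 0).
Proof. by move=> x; apply: continuous_max; [exact: continuous_vA | exact: cst_continuous]. Qed.

Lemma convex_max_vA0 : convex_function (Delta R n) (fun s => Num.max (vA A s) 0).
Proof. by apply/convex_functionP => x y t _ _ t01; rewrite -!vA_cons0 //; exact: vA_convex. Qed.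

End MaxPayoff.

Section ConvexOrder.
Variables (R : realType) (n : nat) (c : R) (S : set (Borel R n)).
Variables pi pi' : probability (Borel R n) R.

Lemma Mrel_exclusion_sub : Mrel S pi' pi -> exclusion_sub c S pi' pi.
Proof.
move=> M A alpha [A0 /andP[alpha_gt0 _]]; apply: le_trans.
apply: lee_wpmul2l; first by rewrite lee_fin ltW.
apply: M; first exact: convex_max_vA0.
exact/continuous_subspaceT/continuous_max_vA0.
Qed.

Hypotheses (n_gt0 : (0 < n)%N) (c_gt0 : 0 < c) (mS : measurable S) (SD : S `<=` Delta R n).
Hypotheses (piS : pi S = 1%E) (pi'S : pi' S = 1%E).
Hypothesis sub : exclusion_sub c S pi' pi.

Lemma exclusion_sub_max_vA0 A : A != [::] ->
  (\int[pi]_(s in S) (Num.max (vA A s) 0)%:E <=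
   \int[pi']_(s in S) (Num.max (vA A s) 0)%:E)%E.
Proof.
move=> A0; have F_cont : {within Delta R n, continuous (fun s => Num.max (vA A s) 0)}.
  exact/continuous_subspaceT/continuous_max_vA0.
have scaled t (P : probability (Borel R n) R) : 0 < t -> P S = 1%E ->
    (\int[P]_(s in S) (Num.max (vA (map ( *:%R t) A) s) 0)%:E =
     t%:E * \int[P]_(s in S) (Num.max (vA A s) 0)%:E)%E.
  move=> t_gt0 PS; transitivity (\int[P]_(s in S) (t%:E * (Num.max (vA A s) 0)%:E))%E.
    apply: eq_integral => s _; rewrite -EFinM maxr_pMr ?(ltW t_gt0) // mulr0.
    rewrite (@vA_map _ _ _ _ ( *%R t)) //.
    - by move=> u v; rewrite ler_pM2l.
    - by move=> a; rewrite dotpZl.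
  by rewrite integralZl //; exact: integrable_within_Delta.
apply: (le_of_scaled_le c_gt0); rewrite ?integral_within_Delta_fin_num //.
- by apply: integral_ge0 => s _; rewrite lee_fin le_max lexx orbT.
- by apply: integral_ge0 => s _; rewrite lee_fin le_max lexx orbT.
move=> t t_gt0 ex'; rewrite -scaled //.
have firm_tA : firm (map ( *:%R t) A) 1.
  by split; [rewrite -size_eq0 size_map size_eq0 | rewrite ltr01 lexx].
by have := sub firm_tA; rewrite /excludes !mul1e; apply; rewrite scaled.
Qed.

Lemma exclusion_sub_vA A : A != [::] ->
  (\int[pi]_(s in S) (vA A s)%:E <= \int[pi']_(s in S) (vA A s)%:E)%E.
Proof.
move=> A0; have vA_cont : {within Delta R n, continuous (vA A)}.
  exact/continuous_subspaceT/continuous_vA.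
have [K hK] := bound_within_Delta vA_cont.
pose B := map (fun a => a + K *: ones R n) A.
have B0 : B != [::] by rewrite -size_eq0 size_map size_eq0.
have shifted (P : probability (Borel R n) R) : P S = 1%E ->
    (\int[P]_(s in S) (Num.max (vA B s) 0)%:E = \int[P]_(s in S) (vA A s)%:E + K%:E)%E.
  move=> PS; rewrite -integral_addr_cst //; apply: eq_integral => s /set_mem/SD Ds.
  rewrite (@vA_map _ _ _ _ (+%R^~ K)) //; last first.
  - by move=> a; rewrite dotpDl dotpZl dotp_ones_Delta // mulr1.
  - by move=> u v; rewrite lerD2r.
  by congr (_%:E); apply/max_idPl; have := hK s Ds; rewrite ler_norml; lra.
by have := exclusion_sub_max_vA0 B0; rewrite !shifted // leeD2rE.
Qed.

Lemma exclusion_sub_Mrel : Mrel S pi' pi.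
Proof.
move=> h h_convex h_cont; apply/lee_addgt0Pr => e e_gt0.
have [A [A0 hA]] := vA_approx n_gt0 h_convex h_cont e_gt0.
have vA_cont : {within Delta R n, continuous (vA A)}.
  exact/continuous_subspaceT/continuous_vA.
have vAe_cont : {within Delta R n, continuous (fun z => vA A z + e)}.
  by apply: within_continuousD => //; apply: continuous_subspaceT; exact: cst_continuous.
apply: (@le_trans _ _ (\int[pi]_(s in S) (vA A s + e)%:E)%E).
  by apply: le_integral_within_Delta => // z /hA[_ /ltW].
rewrite integral_addr_cst // leeD2rE // (le_trans (exclusion_sub_vA A0)) //.
by apply: le_integral_within_Delta => // z /hA[].
Qed.

End ConvexOrder.

Theorem lemma1 (R : realType) (n : nat) (hn : (0 < n)%N)
    (S : set (Borel R n)) (mS : measurable S) (SD : S `<=` Delta R n)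
    (c : R) (hc : 0 < c)
    (pi pi' : probability (Borel R n) R)
    (piS : pi S = 1%E) (pi'S : pi' S = 1%E)
    (hp : forall i, skill S pi i = skill S pi' i) :
  Mrel S pi' pi <-> (systematic c S pi pi' \/ no_discrimination c S pi pi').
Proof.
rewrite discrimination_cases; split; first exact: Mrel_exclusion_sub.
exact: exclusion_sub_Mrel.
Qed.
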